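(* Let $P_E$ be the set of all primitive Eisenstein triples, i.e. triples $(a,b,c) \in \mathbb{Z}^3_{\geq 0} \setminus \{(0,0,0)\}$ with $a^2 - ab + b^2 = c^2$, $a \leq b$ and $\gcd(a,b,c)=1$. Let $G_E = \langle U, M_1, M_2, M_3 \rangle$ be the non-commutative monoid generated by the matrices $$U = \begin{bmatrix} -1&1&0 \\ 0&1&0 \\ 0&0&1 \end{bmatrix},\quad M_1 = \begin{bmatrix} 3 & -4 & 4 \\ 7 & -7 & 8 \\ 6 & -6 & 7 \end{bmatrix},\quad M_2 = \begin{bmatrix} -4 & 3 & 4 \\ -7 & 7 & 8 \\ -6 & 6 & 7 \end{bmatrix},\quad M_3 = \begin{bmatrix} 1 & 3 & 4 \\ 0 & 7 & 8 \\ 0 & 6 & 7 \end{bmatrix}$$ in $\operatorname{GL}_3(\mathbb{Z})$. Then $G_E$ acts on the set $P_E$ by left multiplication: $$M(a,b,c) = M \begin{bmatrix} a \\ b \\ c \end{bmatrix} \in P_E$$ for every $M \in G_E$ and $(a,b,c) \in P_E$.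
   Context: An Eisenstein triple is a solution $(a,b,c) \in \mathbb{Z}^3_{\geq 0}\setminus\{(0,0,0)\}$ of $a^2-ab+b^2=c^2$; it is primitive if additionally $a \leq b$ and $\gcd(a,b,c)=1$. Note $U(a,b,c) = (b-a,b,c)$. *)

From mathcomp Require Import all_boot all_order all_algebra.
Set Implicit Arguments. Unset Strict Implicit. Unset Printing Implicit Defensive.
Import Order.TTheory GRing.Theory Num.Theory.
Local Open Scope ring_scope.

Definition mx3 (a11 a12 a13 a21 a22 a23 a31 a32 a33 : int) : 'M[int]_3 :=
  \matrix_(i < 3, j < 3)
    nth 0 (nth [::] [:: [:: a11; a12; a13]; [:: a21; a22; a23]; [:: a31; a32; a33]] i) j.

Definition U_E  : 'M[int]_3 := mx3 (-1) 1 0   0 1 0   0 0 1.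
Definition M1_E : 'M[int]_3 := mx3 3 (-4) 4   7 (-7) 8   6 (-6) 7.
Definition M2_E : 'M[int]_3 := mx3 (-4) 3 4   (-7) 7 8   (-6) 6 7.
Definition M3_E : 'M[int]_3 := mx3 1 3 4   0 7 8   0 6 7.

Inductive in_GE : 'M[int]_3 -> Prop :=
  | GE_one : in_GE 1%:M
  | GE_U : in_GE U_E
  | GE_M1 : in_GE M1_E
  | GE_M2 : in_GE M2_E
  | GE_M3 : in_GE M3_E
  | GE_mul A B : in_GE A -> in_GE B -> in_GE (A *m B).

Definition primitive_eisenstein (a b c : int) : Prop :=
  (0 <= a) /\ (0 <= b) /\ (0 <= c) /\
  ~ (a = 0 /\ b = 0 /\ c = 0) /\
  a ^+ 2 - a * b + b ^+ 2 = c ^+ 2 /\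
  (a <= b) /\
  gcdz (gcdz a b) c = 1.

Definition in_PE (v : 'cV[int]_3) : Prop :=
  primitive_eisenstein (v ord0 ord0) (v (inord 1) ord0) (v (inord 2) ord0).

(** Each generator [X] of [G_E] preserves the form [a^2 - ab + b^2 - c^2]
    and has an integral inverse [Y]; the latter makes the entries of [v]
    integral combinations of those of [X v], so a common divisor of [X v]
    divides [gcd(a,b,c) = 1].  Nonnegativity and the ordering [a <= b] of
    [X v] follow from [2b - a <= 2c], which holds because
    [4c^2 = (2b - a)^2 + 3a^2]. *)
From mathcomp Require Import all_boot all_order all_algebra.
From mathcomp Require Import ring zify.
Import Order.TTheory GRing.Theory Num.Theory.
Local Open Scope ring_scope.

Lemma mx3_mulmxE (x11 x12 x13 x21 x22 x23 x31 x32 x33 : int) (v : 'cV[int]_3) :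
  let a := v ord0 ord0 in let b := v (inord 1) ord0 in let c := v (inord 2) ord0 in
  let w := mx3 x11 x12 x13 x21 x22 x23 x31 x32 x33 *m v in
  [/\ w ord0 ord0 = x11 * a + x12 * b + x13 * c,
      w (inord 1) ord0 = x21 * a + x22 * b + x23 * c &
      w (inord 2) ord0 = x31 * a + x32 * b + x33 * c].
Proof.
have e1 : (inord 1 : 'I_3) = Ordinal (isT : 1 < 3)%N by apply/val_inj; rewrite /= inordK.
have e2 : (inord 2 : 'I_3) = Ordinal (isT : 2 < 3)%N by apply/val_inj; rewrite /= inordK.
rewrite /= e1 e2 /mx3 !mxE !big_ord_recr !big_ord0 /= !mxE /= !add0r.
by split; repeat f_equal; apply/val_inj.
Qed.

Lemma gcdz3_eq1_of_lincomb (a b c a' b' c' y11 y12 y13 y21 y22 y23 y31 y32 y33 : int) :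
  a = y11 * a' + y12 * b' + y13 * c' ->
  b = y21 * a' + y22 * b' + y23 * c' ->
  c = y31 * a' + y32 * b' + y33 * c' ->
  gcdz (gcdz a b) c = 1 -> gcdz (gcdz a' b') c' = 1.
Proof.
move=> ea eb ec gcd1; set g := gcdz (gcdz a' b') c'.
have g_lincomb x y z : (g %| x * a' + y * b' + z * c')%Z.
  have ga : (g %| a')%Z := dvdz_trans (dvdz_gcdl _ c') (dvdz_gcdl a' b').
  have gb : (g %| b')%Z := dvdz_trans (dvdz_gcdl _ c') (dvdz_gcdr a' b').
  have gc : (g %| c')%Z := dvdz_gcdr (gcdz a' b') c'.
  by rewrite !rpredD ?dvdz_mull.
suff : (g %| gcdz (gcdz a b) c)%Z.
  by rewrite gcd1 dvdz1 => /eqP g_abs1; rewrite -[g]gez0_abs ?g_abs1.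
by rewrite !dvdz_gcd ea eb ec !g_lincomb.
Qed.

Lemma primitive_eisensteinP (a b c : int) :
  primitive_eisenstein a b c <->
  [/\ 0 <= a, a <= b, 0 <= c, a ^+ 2 - a * b + b ^+ 2 = c ^+ 2
    & gcdz (gcdz a b) c = 1].
Proof.
split=> [[a0 [_ [c0 [_ [form [ab gcd1]]]]]] | [a0 ab c0 form gcd1]] //.
do 3 (split; first lia); split; last by [].
by move=> [a_0 [b_0 c_0]]; move: gcd1; rewrite a_0 b_0 c_0.
Qed.

Lemma eisenstein_leq {a b c : int} :
  0 <= a -> a <= b -> 0 <= c -> a ^+ 2 - a * b + b ^+ 2 = c ^+ 2 ->
  2 * b - a <= 2 * c.
Proof. by move=> *; nia. Qed.

Definition preserves_primitive (x11 x12 x13 x21 x22 x23 x31 x32 x33 : int) :=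
  forall a b c, primitive_eisenstein a b c ->
  primitive_eisenstein (x11 * a + x12 * b + x13 * c)
    (x21 * a + x22 * b + x23 * c) (x31 * a + x32 * b + x33 * c).

Lemma preserves_primitiveP (x11 x12 x13 x21 x22 x23 x31 x32 x33
                            y11 y12 y13 y21 y22 y23 y31 y32 y33 : int) :
  (forall a b c,
    let a' := x11 * a + x12 * b + x13 * c in
    let b' := x21 * a + x22 * b + x23 * c in
    let c' := x31 * a + x32 * b + x33 * c in
    [/\ a = y11 * a' + y12 * b' + y13 * c',
        b = y21 * a' + y22 * b' + y23 * c' &
        c = y31 * a' + y32 * b' + y33 * c']) ->
  (forall a b c,
    let a' := x11 * a + x12 * b + x13 * c in
    let b' := x21 * a + x22 * b + x23 * c in
    let c' := x31 * a + x32 * b + x33 * c in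
    a' ^+ 2 - a' * b' + b' ^+ 2 - c' ^+ 2 = a ^+ 2 - a * b + b ^+ 2 - c ^+ 2) ->
  (forall a b c, 0 <= a -> a <= b -> 0 <= c -> 2 * b - a <= 2 * c ->
    [/\ 0 <= x11 * a + x12 * b + x13 * c,
        x11 * a + x12 * b + x13 * c <= x21 * a + x22 * b + x23 * c &
        0 <= x31 * a + x32 * b + x33 * c]) ->
  preserves_primitive x11 x12 x13 x21 x22 x23 x31 x32 x33.
Proof.
move=> inv form_inv order a b c /primitive_eisensteinP [a0 ab c0 form gcd1].
have [ea eb ec] := inv a b c.
have [a'0 a'b' c'0] := order a b c a0 ab c0 (eisenstein_leq a0 ab c0 form).
apply/primitive_eisensteinP; split=> //; last exact: gcdz3_eq1_of_lincomb ea eb ec gcd1.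
by apply/eqP; rewrite -subr_eq0 form_inv form subrr.
Qed.

(* The second block of coefficients is the inverse matrix; [U_E] is an involution. *)

Lemma preserves_primitive_U : preserves_primitive (-1) 1 0 0 1 0 0 0 1.
Proof.
apply: (@preserves_primitiveP _ _ _ _ _ _ _ _ _ (-1) 1 0 0 1 0 0 0 1).
- by move=> a b c; split; ring.
- by move=> a b c /=; ring.
- by move=> a b c *; split; lia.
Qed.

Lemma preserves_primitive_M1 : preserves_primitive 3 (-4) 4 7 (-7) 8 6 (-6) 7.
Proof.
apply: (@preserves_primitiveP _ _ _ _ _ _ _ _ _ (-1) 4 (-4) (-1) (-3) 4 0 (-6) 7).
- by move=> a b c; split; ring.
- by move=> a b c /=; ring.
- by move=> a b c *; split; lia.
Qed.

Lemma preserves_primitive_M2 : preserves_primitive (-4) 3 4 (-7) 7 8 (-6) 6 7.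
Proof.
apply: (@preserves_primitiveP _ _ _ _ _ _ _ _ _ (-1) (-3) 4 (-1) 4 (-4) 0 (-6) 7).
- by move=> a b c; split; ring.
- by move=> a b c /=; ring.
- by move=> a b c *; split; lia.
Qed.

Lemma preserves_primitive_M3 : preserves_primitive 1 3 4 0 7 8 0 6 7.
Proof.
apply: (@preserves_primitiveP _ _ _ _ _ _ _ _ _ 1 3 (-4) 0 7 (-8) 0 (-6) 7).
- by move=> a b c; split; ring.
- by move=> a b c /=; ring.
- by move=> a b c *; split; lia.
Qed.

Lemma in_PE_mx3_mulmx (x11 x12 x13 x21 x22 x23 x31 x32 x33 : int) (v : 'cV[int]_3) :
  preserves_primitive x11 x12 x13 x21 x22 x23 x31 x32 x33 -> in_PE v ->
  in_PE (mx3 x11 x12 x13 x21 x22 x23 x31 x32 x33 *m v).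
Proof.
move=> preserves; rewrite /in_PE.
by have [-> -> ->] := mx3_mulmxE x11 x12 x13 x21 x22 x23 x31 x32 x33 v; apply: preserves.
Qed.

Theorem lemma6p1 (M : 'M[int]_3) (v : 'cV[int]_3) :
  in_GE M -> in_PE v -> in_PE (M *m v).
Proof.
move=> GE_M; elim: GE_M v => {M}.
- by move=> v; rewrite mul1mx.
- by move=> v; apply: in_PE_mx3_mulmx preserves_primitive_U.
- by move=> v; apply: in_PE_mx3_mulmx preserves_primitive_M1.
- by move=> v; apply: in_PE_mx3_mulmx preserves_primitive_M2.
- by move=> v; apply: in_PE_mx3_mulmx preserves_primitive_M3.
- by move=> A B _ IHA _ IHB v PE_v; rewrite -mulmxA; apply/IHA/IHB.
Qed.
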